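(* For every integer $n\ge 1$ and every vertex $v$ of \[\mathrm{Newt}(U_n)=\sum_{1\le i<j\le n}\mathrm{conv}\{e_i+e_{n+j},\,e_j+e_{n+i}\}\subseteq\mathbb{R}^{2n},\] we have $v\in N_{\mathrm{Newt}(U_n)}(\{v\})$.
   Context: $e_1,\dots,e_{2n}$ are the standard basis vectors of $\mathbb{R}^{2n}$ and the sum is a Minkowski sum. For a polytope $P\subseteq\mathbb{R}^m$ and $a\in\mathbb{R}^m$, $\mathrm{face}_a(P)=\{x\in P: a\cdot y\le a\cdot x \text{ for all } y\in P\}$, and for a face $F$ of $P$ the normal cone is $N_P(F)=\{a\in\mathbb{R}^m:\mathrm{face}_a(P)=F\}$. *)

From HB Require Import structures.
From mathcomp Require Import all_boot all_order all_algebra.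
From mathcomp Require Import reals.
Set Implicit Arguments. Unset Strict Implicit. Unset Printing Implicit Defensive.
Import Order.TTheory GRing.Theory Num.Theory.
Local Open Scope ring_scope.

Section Polytopes.
Variable R : realType.

Definition dotv (m : nat) (a x : 'rV[R]_m) : R := \sum_(k < m) a 0 k * x 0 k.

Definition ebasis (m : nat) (k : 'I_m) : 'rV[R]_m := delta_mx 0 k.

Definition face (m : nat) (P : 'rV[R]_m -> Prop) (a : 'rV[R]_m) : 'rV[R]_m -> Prop :=
  fun x => P x /\ forall y, P y -> dotv a y <= dotv a x.

Definition normal_cone (m : nat) (P F : 'rV[R]_m -> Prop) : 'rV[R]_m -> Prop :=
  fun a => forall x, face P a x <-> F x.

Definition is_vertex (m : nat) (P : 'rV[R]_m -> Prop) (v : 'rV[R]_m) : Prop :=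
  exists a, forall x, face P a x <-> x = v.

Definition conv2 (m : nat) (a b : 'rV[R]_m) : 'rV[R]_m -> Prop :=
  fun x => exists t : R, 0 <= t <= 1 /\ x = t *: a + (1 - t) *: b.

Definition minkowski_sum (m : nat) (I : finType) (Q : pred I)
    (S : I -> 'rV[R]_m -> Prop) : 'rV[R]_m -> Prop :=
  fun x => exists f : I -> 'rV[R]_m,
    (forall p, Q p -> S p (f p)) /\ x = \sum_(p | Q p) f p.

(* Newt(U_n) in R^(2n), coordinates indexed by 'I_(n+n):
   e_i = ebasis (lshift n i), e_{n+j} = ebasis (rshift n j)  (0-based i, j) *)
Definition NewtU (n : nat) : 'rV[R]_(n + n) -> Prop :=
  minkowski_sum (fun p : 'I_n * 'I_n => (p.1 < p.2)%N)
    (fun p => conv2 (ebasis (lshift n p.1) + ebasis (rshift n p.2))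
                    (ebasis (lshift n p.2) + ebasis (rshift n p.1))).

End Polytopes.

From HB Require Import structures.
From mathcomp Require Import all_boot all_order all_algebra.
From mathcomp Require Import reals.
From mathcomp Require Import ring lra.
Set Implicit Arguments. Unset Strict Implicit. Unset Printing Implicit Defensive.
Import Order.TTheory GRing.Theory Num.Theory.
Local Open Scope ring_scope.

(* Newt(U_n) is a zonotope: the Minkowski sum of the segments [A_q, B_q] with
   A_q = e_i + e_(n+j), B_q = e_j + e_(n+i) for q = (i, j), i < j.  A linear form
   c has a unique maximiser on such a sum iff it separates every segment
   (c.A_q <> c.B_q); the maximiser is then the sum of the maximising endpoints,
   so it only depends on the signs of c.(A_q - B_q).  With g_c(k) = c_k - c_(n+k)
   we have c.(A_q - B_q) = g_c(i) - g_c(j), and the vertex v selected by c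
   satisfies g_v(k) = sum_j sg (g_c(k) - g_c(j)), a strictly increasing function
   of g_c(k).  Hence v induces the same signs as c, so v selects itself. *)

Lemma ler_sgr (R : realDomainType) (x y : R) : x <= y -> Num.sg x <= Num.sg y.
Proof.
move=> le_xy; case: (ltrgt0P x) => x0; case: (ltrgt0P y) => y0.
all: rewrite ?(gtr0_sg x0) ?(ltr0_sg x0) ?(gtr0_sg y0) ?(ltr0_sg y0) ?x0 ?y0 ?sgr0 //.
all: lra.
Qed.

Lemma sum_ltn_pairs_double (V : zmodType) (n : nat) (G : 'I_n * 'I_n -> V) :
    (forall i j, G (i, j) = G (j, i)) -> (forall i, G (i, i) = 0) ->
  (\sum_(q : 'I_n * 'I_n | (q.1 < q.2)%N) G q) *+ 2 = \sum_q G q.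
Proof.
move=> G_sym G_diag.
rewrite [X in _ = X](bigID (fun q : 'I_n * 'I_n => (q.1 < q.2)%N)) /= mulr2n.
congr (_ + _).
rewrite (bigID (fun q : 'I_n * 'I_n => (q.2 < q.1)%N) (fun q => ~~ _)) /=.
rewrite [X in _ + X]big1 ?addr0; last first.
  by move=> [i j] /=; case: ltngtP => // /val_inj -> _; exact: G_diag.
rewrite (reindex_inj (h := fun q => (q.2, q.1))) /=; last by move=> [? ?] [? ?] [-> ->].
by apply: eq_big => [[i j]|[i j] _] /=; [case: ltngtP | rewrite G_sym].
Qed.

Lemma sum_mul_delta (V : pzRingType) (I : finType) (F : I -> V) (k : I) :
  \sum_i F i * (i == k)%:R = F k.
Proof. by rewrite (bigD1 k) //= big1 ?addr0 => [|i /negbTE ->]; rewrite ?eqxx ?mulr1 ?mulr0. Qed.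

Section DotProduct.
Variables (R : realType) (m : nat).
Implicit Types a x y : 'rV[R]_m.

Lemma dotvD a x y : dotv a (x + y) = dotv a x + dotv a y.
Proof. by rewrite /dotv -big_split; apply: eq_bigr => k _; rewrite mxE mulrDr. Qed.

Lemma dotvZ a t x : dotv a (t *: x) = t * dotv a x.
Proof. by rewrite /dotv mulr_sumr; apply: eq_bigr => k _; rewrite mxE mulrCA. Qed.

Lemma dotv_sum a (I : finType) (Q : pred I) (F : I -> 'rV[R]_m) :
  dotv a (\sum_(p | Q p) F p) = \sum_(p | Q p) dotv a (F p).
Proof.
rewrite /dotv exchange_big; apply: eq_bigr => k _.
by rewrite summxE mulr_sumr.
Qed.

Lemma dotv_ebasis a k : dotv a (ebasis R k) = a 0 k.
Proof.
rewrite /dotv (bigD1 k) //= big1 => [|j /negbTE jk]; rewrite /ebasis !mxE eqxx /=.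
  by rewrite eqxx mulr1 addr0.
by rewrite jk mulr0.
Qed.

Lemma conv2_left (a b : 'rV[R]_m) : conv2 a b a.
Proof. by exists 1; rewrite lexx ler01 scale1r subrr scale0r addr0. Qed.

Lemma conv2_right (a b : 'rV[R]_m) : conv2 a b b.
Proof. by exists 0; rewrite lexx ler01 scale0r add0r subr0 scale1r. Qed.

End DotProduct.

Section SegmentSum.
Variables (R : realType) (m : nat) (I : finType) (Q : pred I) (A B : I -> 'rV[R]_m).
Implicit Types (c d v x : 'rV[R]_m) (p : I).

Local Notation segment p := (conv2 (A p) (B p)).
Local Notation P := (minkowski_sum Q (fun p => segment p)).

Definition seg_argmax c p := if dotv c (B p) < dotv c (A p) then A p else B p.

Definition seg_sum_argmax c := \sum_(p | Q p) seg_argmax c p.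

Definition separates c := forall p, Q p -> dotv c (A p) != dotv c (B p).

Lemma seg_argmax_in c p : segment p (seg_argmax c p).
Proof. by rewrite /seg_argmax; case: ifP => _; [exact: conv2_left | exact: conv2_right]. Qed.

Lemma dotv_le_seg_argmax c p x : segment p x -> dotv c x <= dotv c (seg_argmax c p).
Proof.
move=> [t [/andP [t0 t1] ->]]; rewrite dotvD !dotvZ /seg_argmax.
by case: ltrP => cBA; nra.
Qed.

Lemma seg_argmax_unique c p x : dotv c (A p) != dotv c (B p) -> segment p x ->
  dotv c (seg_argmax c p) <= dotv c x -> x = seg_argmax c p.
Proof.
move=> cAB [t [/andP [t0 t1] ->]]; rewrite dotvD !dotvZ /seg_argmax.
case: ltrP => [cBA | cAB_le] le_x.
  have -> : t = 1 by apply/eqP; rewrite eq_le t1 /=; nra.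
  by rewrite subrr scale0r addr0 scale1r.
have cAB_lt : dotv c (A p) < dotv c (B p) by rewrite lt_neqAle cAB.
have -> : t = 0 by apply/eqP; rewrite eq_le t0 andbT; nra.
by rewrite subr0 scale0r add0r scale1r.
Qed.

Lemma seg_sum_argmax_in c : P (seg_sum_argmax c).
Proof. by exists (seg_argmax c); split=> // p _; exact: seg_argmax_in. Qed.

Lemma dotv_le_seg_sum_argmax c x : P x -> dotv c x <= dotv c (seg_sum_argmax c).
Proof.
move=> [f [f_seg ->]]; rewrite !dotv_sum; apply: ler_sum => p Qp.
exact/dotv_le_seg_argmax/f_seg.
Qed.

Lemma seg_sum_argmax_unique c x : separates c -> P x ->
  dotv c (seg_sum_argmax c) <= dotv c x -> x = seg_sum_argmax c.
Proof.
move=> c_sep [f [f_seg ->]]; rewrite !dotv_sum => le_x.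
have le_f p : Q p -> dotv c (f p) <= dotv c (seg_argmax c p).
  by move=> Qp; exact/dotv_le_seg_argmax/f_seg.
have slack0 : \sum_(p | Q p) (dotv c (seg_argmax c p) - dotv c (f p)) = 0.
  by rewrite sumrB; apply/eqP; rewrite subr_eq0 eq_le le_x ler_sum.
have /psumr_eq0P slack0_p := slack0; apply: eq_bigr => p Qp.
apply: seg_argmax_unique; [exact: c_sep | exact: f_seg |].
have /eqP := slack0_p (fun p Qp => etrans (subr_ge0 _ _) (le_f p Qp)) p Qp.
by rewrite subr_eq0 => /eqP ->.
Qed.

Lemma face_seg_sum c : separates c -> forall x, face P c x <-> x = seg_sum_argmax c.
Proof.
move=> c_sep x; split=> [[Px le_x] | ->].
  exact/(seg_sum_argmax_unique c_sep Px)/le_x/seg_sum_argmax_in.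
by split=> [|y]; [exact: seg_sum_argmax_in | exact: dotv_le_seg_sum_argmax].
Qed.

Lemma separates_of_face_singleton c v : (forall p, Q p -> A p != B p) ->
  (forall x, face P c x <-> x = v) -> separates c.
Proof.
move=> AB_neq face_v p0 Qp0; apply: contra (AB_neq p0 Qp0) => /eqP cAB.
have [[f [f_seg v_def]] v_max] := (face_v v).2 erefl.
(* If c is constant on segment p0, moving the p0-th summand of v anywhere on that
   segment stays in the face {v}; doing so with A p0 and with B p0 gives A p0 = B p0. *)
have dotv_seg y : segment p0 y -> dotv c y = dotv c (A p0).
  by move=> [t [_ ->]]; rewrite dotvD !dotvZ -cAB; ring.
pose f_at y p := if p == p0 then y else f p.
have f_at_v y : segment p0 y -> \sum_(p | Q p) f_at y p = v.
  move=> y_seg; apply/face_v; split.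
    exists (f_at y); split=> // p Qp.
    by rewrite /f_at; case: eqP => [->|_]; [|exact: f_seg].
  move=> z Pz; apply: le_trans (v_max z Pz) _; rewrite v_def !dotv_sum.
  rewrite (bigD1 p0) //= [X in _ <= X](bigD1 p0) //= /f_at eqxx.
  rewrite (dotv_seg _ y_seg) (dotv_seg _ (f_seg _ Qp0)) lerD2l.
  by apply: ler_sum => p /andP [_ /negbTE ->].
have : \sum_(p | Q p) (f_at (A p0) p - f_at (B p0) p) = A p0 - B p0.
  rewrite (bigD1 p0) //= big1 ?addr0 => [|p /andP [_ /negbTE p_p0]].
    by rewrite /f_at eqxx.
  by rewrite /f_at p_p0 subrr.
rewrite sumrB (f_at_v _ (conv2_left _ _)) (f_at_v _ (conv2_right _ _)) subrr.
by move=> /esym /eqP; rewrite subr_eq0.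
Qed.

Lemma face_seg_sum_sg c d : separates c ->
    (forall p, Q p -> Num.sg (dotv d (A p) - dotv d (B p))
                      = Num.sg (dotv c (A p) - dotv c (B p))) ->
  forall x, face P d x <-> x = seg_sum_argmax c.
Proof.
move=> c_sep sg_dc.
have d_sep : separates d.
  by move=> p Qp; rewrite -subr_eq0 -sgr_eq0 sg_dc // sgr_eq0 subr_eq0 c_sep.
have -> : seg_sum_argmax c = seg_sum_argmax d.
  apply: eq_bigr => p Qp; rewrite /seg_argmax; congr (if _ then _ else _).
  by rewrite -[RHS]subr_gt0 -[RHS]sgr_gt0 sg_dc // sgr_gt0 subr_gt0.
exact: face_seg_sum.
Qed.
End SegmentSum.

Section NewtonPolytope.
Variables (R : realType) (n : nat).
Local Notation V := 'rV[R]_(n + n).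
Implicit Types (c : V) (q : 'I_n * 'I_n) (k : 'I_n).

Definition newtA q : V := ebasis R (lshift n q.1) + ebasis R (rshift n q.2).
Definition newtB q : V := ebasis R (lshift n q.2) + ebasis R (rshift n q.1).
Definition ltn_pair q := (q.1 < q.2)%N.

Lemma NewtU_seg_sum :
  @NewtU R n = minkowski_sum ltn_pair (fun q => conv2 (newtA q) (newtB q)).
Proof. by []. Qed.

Local Notation vertex c := (seg_sum_argmax ltn_pair newtA newtB c).

Definition gap c k := c 0 (lshift n k) - c 0 (rshift n k).

Lemma gap_sum (I : finType) (P : pred I) (F : I -> V) k :
  gap (\sum_(p | P p) F p) k = \sum_(p | P p) gap (F p) k.
Proof. by rewrite /gap !summxE -sumrB. Qed.

Lemma gap_newtA q k : gap (newtA q) k = (q.1 == k)%:R - (q.2 == k)%:R.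
Proof. by rewrite /gap /newtA /ebasis !mxE !eqxx /= !eq_shift !(eq_sym k) addr0 add0r. Qed.

Lemma gap_newtB q k : gap (newtB q) k = (q.2 == k)%:R - (q.1 == k)%:R.
Proof. by rewrite /gap /newtB /ebasis !mxE !eqxx /= !eq_shift !(eq_sym k) addr0 add0r. Qed.

Lemma dotv_newtA_sub_newtB c q :
  dotv c (newtA q) - dotv c (newtB q) = gap c q.1 - gap c q.2.
Proof. by rewrite /newtA /newtB /gap !dotvD !dotv_ebasis; ring. Qed.

Lemma newtA_neq_newtB q : ltn_pair q -> newtA q != newtB q.
Proof.
move=> lt_q; apply/eqP => /(congr1 (gap^~ q.1)).
rewrite gap_newtA gap_newtB eqxx.
have -> : (q.2 == q.1) = false by rewrite -val_eqE gtn_eqF.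
rewrite /=; lra.
Qed.

Lemma gap_seg_argmax c q k : gap c q.1 != gap c q.2 ->
  gap (seg_argmax newtA newtB c q) k
    = Num.sg (gap c q.1 - gap c q.2) * ((q.1 == k)%:R - (q.2 == k)%:R).
Proof.
rewrite -subr_eq0 /seg_argmax -subr_gt0 dotv_newtA_sub_newtB => neq.
case: ifP => [gt0 | /negbT]; first by rewrite gtr0_sg // mul1r gap_newtA.
rewrite -leNgt le_eqVlt (negbTE neq) /= => lt0.
by rewrite ltr0_sg // mulN1r gap_newtB opprB.
Qed.

Lemma separates_gap c q : separates ltn_pair newtA newtB c -> ltn_pair q ->
  gap c q.1 != gap c q.2.
Proof. by move=> c_sep lt_q; rewrite -subr_eq0 -dotv_newtA_sub_newtB subr_eq0 c_sep. Qed.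

Lemma gap_seg_sum_argmax c k : separates ltn_pair newtA newtB c ->
  gap (vertex c) k = \sum_j Num.sg (gap c k - gap c j).
Proof.
move=> c_sep.
pose G q := Num.sg (gap c q.1 - gap c q.2) * ((q.1 == k)%:R - (q.2 == k)%:R).
rewrite gap_sum (eq_bigr G) => [|q lt_q]; last first.
  exact/gap_seg_argmax/separates_gap.
(* G is symmetric and vanishes on the diagonal, so the sum over i < j is half the
   full double sum, which splits into two copies of the right-hand side. *)
apply: (@pmulrnI _ 2) => //; rewrite sum_ltn_pairs_double => [|i j|i]; first last.
- by rewrite /G /= !subrr mulr0.
- by rewrite /G /= -opprB sgrN -[(j == k)%:R - _]opprB mulNr mulrN.
rewrite (eq_bigr (fun q => G (q.1, q.2))) => [|[] //].
rewrite -(pair_bigA _ (fun i j => G (i, j))) /G /=.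
under eq_bigr do under eq_bigr do rewrite mulrBr.
under eq_bigr do rewrite sumrB.
rewrite sumrB mulr2n; congr (_ + _).
  by rewrite exchange_big; under eq_bigr do rewrite sum_mul_delta.
by rewrite -sumrN; apply: eq_bigr => i _; rewrite sum_mul_delta -sgrN opprB.
Qed.

Lemma gap_seg_sum_argmax_lt c i j : separates ltn_pair newtA newtB c ->
  gap c j < gap c i -> gap (vertex c) j < gap (vertex c) i.
Proof.
move=> c_sep lt_ji; rewrite !gap_seg_sum_argmax //.
rewrite [ltLHS](bigD1 i) //= [ltRHS](bigD1 i) //= subrr sgr0 ltr0_sg ?subr_lt0 //.
apply: ltr_leD; first by rewrite ltrN10.
by apply: ler_sum => y _; apply: ler_sgr; rewrite lerD2r ltW.
Qed.

Lemma sg_gap_seg_sum_argmax c i j : separates ltn_pair newtA newtB c ->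
  gap c i != gap c j ->
  Num.sg (gap (vertex c) i - gap (vertex c) j) = Num.sg (gap c i - gap c j).
Proof.
move=> c_sep; rewrite neq_lt => /orP [lt_ij | lt_ji].
  by rewrite !ltr0_sg ?subr_lt0 ?gap_seg_sum_argmax_lt.
by rewrite !gtr0_sg ?subr_gt0 ?gap_seg_sum_argmax_lt.
Qed.
End NewtonPolytope.

Theorem mainTheorem5 (R : realType) (n : nat) (hn : (1 <= n)%N)
    (v : 'rV[R]_(n + n)) :
  is_vertex (@NewtU R n) v ->
  normal_cone (@NewtU R n) (fun x => x = v) v.
Proof.
rewrite /is_vertex /normal_cone NewtU_seg_sum => -[a face_a].
have a_sep : separates (@ltn_pair n) (@newtA R n) (@newtB R n) a.
  exact: separates_of_face_singleton (@newtA_neq_newtB R n) face_a.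
have -> : v = seg_sum_argmax (@ltn_pair n) (@newtA R n) (@newtB R n) a.
  by apply/(face_seg_sum a_sep)/face_a.
apply: (face_seg_sum_sg a_sep) => q lt_q.
by rewrite !dotv_newtA_sub_newtB sg_gap_seg_sum_argmax // separates_gap.
Qed.
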